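(* Let $L$ and $L_0$ be finite lattices and let $\phi: L\to L_0$ be a lattice epimorphism (surjective lattice homomorphism). For $y\in L_0$ let $\sigma(y):=\bigwedge\{x\in L:\ \phi(x)=y\}$ be its smallest pre-image. Fix a nonzero element $v\in L$ with $v=\sigma(\phi(v))$, and let $v/w$ be any prime quotient of $L$ (i.e. $w\prec v$). Let $r/s$ be a prime quotient of $L_0$ which is projective to the quotient $\phi(v)/\phi(w)$. Put $\underline{r}:=\sigma(r)$ and $\underline{s}:=\bigvee\{u\in L:\ u\le \underline{r},\ \phi(u)\le s\}$. Then $\underline{r}/\underline{s}$ is a prime quotient of $L$ and it is projective to $v/w$.
   Context: A quotient $a/b$ in a lattice is a pair with $b\le a$; it is prime if $b\prec a$ ($a$ covers $b$). A quotient $a/b$ transposes up to $c/d$ (and $c/d$ transposes down to $a/b$) if $a\wedge d=b$ and $a\vee d=c$; two quotients are transposed if one transposes up or down to the other. Two quotients are projective if they are connected by a finite sequence of quotients in which consecutive members are transposed. *)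

From HB Require Import structures.
From mathcomp Require Import all_boot all_order.
Set Implicit Arguments. Unset Strict Implicit. Unset Printing Implicit Defensive.
Import Order.Theory.
Local Open Scope order_scope.

(* A quotient a/b is represented by the pair (a, b). *)

Definition covers {d : Order.disp_t} {T : porderType d} (b a : T) : Prop :=
  b < a /\ forall c : T, b <= c -> c <= a -> c = b \/ c = a.

Definition prime_quotient {d : Order.disp_t} {T : porderType d} (q : T * T) : Prop :=
  covers q.2 q.1.

Definition transposes_up {d : Order.disp_t} {T : latticeType d} (q q' : T * T) : Prop :=
  (q.1 `&` q'.2 = q.2) /\ (q.1 `|` q'.2 = q'.1).

Definition transposed {d : Order.disp_t} {T : latticeType d} (q q' : T * T) : Prop :=
  transposes_up q q' \/ transposes_up q' q.

Inductive projective {d : Order.disp_t} {T : latticeType d} : T * T -> T * T -> Prop :=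
  | proj_refl q : projective q q
  | proj_step q q' q'' : transposed q q' -> projective q' q'' -> projective q q''.

Definition lattice_morphism {d : Order.disp_t} {T : latticeType d}
  {d0 : Order.disp_t} {T0 : latticeType d0} (phi : T -> T0) : Prop :=
  (forall x y, phi (x `&` y) = phi x `&` phi y) /\
  (forall x y, phi (x `|` y) = phi x `|` phi y).

Definition sigma {d : Order.disp_t} {L : finTBLatticeType d}
  {d0 : Order.disp_t} {L0 : finTBLatticeType d0} (phi : L -> L0) (y : L0) : L :=
  \meet_(x | phi x == y) x.

From HB Require Import structures.
From mathcomp Require Import all_boot all_order.
Import Order.Theory.
Local Open Scope order_scope.
Set Implicit Arguments. Unset Strict Implicit.

(* Send a quotient a/b of L0 to the quotient sigma(a)/b' of L, where b' is the
   largest element below sigma(a) whose image lies below b.  Since phi is a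
   surjective lattice morphism, phi(sigma a) = a and phi b' = b, and this lifting
   turns every upward transposition of L0 into one of L; hence it maps a chain of
   transpositions to a chain of transpositions.  It also preserves primeness, and
   it sends phi(v)/phi(w) back to v/w when v = sigma(phi v) and w is covered by v. *)

Section LatticeMorphism.
Variables (d : Order.disp_t) (L : latticeType d).
Variables (d0 : Order.disp_t) (L0 : latticeType d0) (phi : L -> L0).
Hypothesis phi_morph : lattice_morphism phi.

Lemma lmorphI x y : phi (x `&` y) = phi x `&` phi y.
Proof. exact: phi_morph.1. Qed.

Lemma lmorphU x y : phi (x `|` y) = phi x `|` phi y.
Proof. exact: phi_morph.2. Qed.

Lemma lmorph_homo_le : {homo phi : x y / x <= y}.
Proof. by move=> x y xy; rewrite -(join_r xy) lmorphU leUl. Qed.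

End LatticeMorphism.

Section LiftQuotient.
Variables (d : Order.disp_t) (L : finTBLatticeType d).
Variables (d0 : Order.disp_t) (L0 : finTBLatticeType d0) (phi : L -> L0).
Hypothesis phi_morph : lattice_morphism phi.
Hypothesis phi_surj : forall y : L0, exists x : L, phi x = y.

Lemma lmorph0 : phi \bot = \bot.
Proof.
have [x phix0] := phi_surj \bot.
by apply/le_anti; rewrite le0x andbT -phix0; apply/(lmorph_homo_le phi_morph)/le0x.
Qed.

Lemma sigma_le x y : phi x = y -> sigma phi y <= x.
Proof. by move=> phixy; apply: meets_inf; rewrite phixy. Qed.

Lemma sigmaK : cancel (sigma phi) phi.
Proof.
move=> y; have [x phixy] := phi_surj y.
have : sigma phi y = \top \/ phi (sigma phi y) = y.
  apply: (big_ind (fun m => m = \top \/ phi m = y)); first by left.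
    move=> m1 m2 [->|h1] [->|h2]; rewrite ?meetx1 ?meet1x; auto.
    by right; rewrite (lmorphI phi_morph) h1 h2 meetxx.
  by move=> i /eqP; right.
case=> // sigma_top; move: (sigma_le phixy).
by rewrite sigma_top le1x => /eqP x_top; rewrite -phixy x_top.
Qed.

Lemma sigma_homo_le : {homo sigma phi : y z / y <= z}.
Proof.
move=> y z yz; apply: (@le_trans _ _ (sigma phi y `&` sigma phi z)); last exact: leIr.
by apply: sigma_le; rewrite (lmorphI phi_morph) !sigmaK; apply/meet_l.
Qed.

Definition sup_below (a : L) (b : L0) : L := \join_(u | (u <= a) && (phi u <= b)) u.

Lemma sup_below_le a b : sup_below a b <= a.
Proof. by apply/joinsP => u /andP[]. Qed.

Lemma le_sup_below a b u : u <= a -> phi u <= b -> u <= sup_below a b.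
Proof. by move=> ua phiub; apply: joins_sup; rewrite ua phiub. Qed.

Lemma lmorph_sup_below_le a b : phi (sup_below a b) <= b.
Proof.
apply: (big_ind (fun x => phi x <= b)); first by rewrite lmorph0 le0x.
  by move=> x y phixb phiyb; rewrite (lmorphU phi_morph) leUx phixb phiyb.
by move=> u /andP[].
Qed.

Lemma lmorph_sup_below_sigma a b : b <= a -> phi (sup_below (sigma phi a) b) = b.
Proof.
move=> ba; apply/le_anti; rewrite lmorph_sup_below_le /= -{1}(sigmaK b).
apply/(lmorph_homo_le phi_morph)/le_sup_below => //; first exact: sigma_homo_le.
by rewrite sigmaK.
Qed.

Definition lift_quotient (q : L0 * L0) : L * L :=
  (sigma phi q.1, sup_below (sigma phi q.1) q.2).

Lemma lift_quotient_prime q : prime_quotient q -> prime_quotient (lift_quotient q).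
Proof.
case: q => a b [/= ba cover_ab]; rewrite /prime_quotient /covers /=.
have phi_lift_b := lmorph_sup_below_sigma (ltW ba).
split.
  rewrite lt_neqAle sup_below_le andbT; apply: contraTneq ba => lift_ba.
  by rewrite -phi_lift_b lift_ba sigmaK ltxx.
move=> c lift_bc ca.
have [phic_b|phic_a] : phi c = b \/ phi c = a.
  apply: cover_ab; first by rewrite -phi_lift_b (lmorph_homo_le phi_morph).
  by rewrite -(sigmaK a) (lmorph_homo_le phi_morph).
- by left; apply/le_anti; rewrite lift_bc andbT le_sup_below // phic_b.
- by right; apply/le_anti; rewrite ca sigma_le.
Qed.

Lemma lift_transposes_up q q' :
  transposes_up q q' -> transposes_up (lift_quotient q) (lift_quotient q').
Proof.
case: q q' => a b [c e] [/= meet_ae join_ae]; rewrite /transposes_up /=.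
have sigma_ac : sigma phi a <= sigma phi c by rewrite sigma_homo_le // -join_ae leUl.
have phi_lift_e : phi (sup_below (sigma phi c) e) = e.
  by rewrite lmorph_sup_below_sigma // -join_ae leUr.
split; apply/le_anti/andP; split.
- apply: le_sup_below; first exact: leIl.
  by rewrite (lmorphI phi_morph) phi_lift_e sigmaK meet_ae.
- rewrite lexI sup_below_le le_sup_below //.
    exact: le_trans (sup_below_le _ _) sigma_ac.
  by rewrite (le_trans (lmorph_sup_below_le _ _)) // -meet_ae leIr.
- by rewrite leUx sigma_ac sup_below_le.
- by apply: sigma_le; rewrite (lmorphU phi_morph) phi_lift_e sigmaK.
Qed.

Lemma lift_projective q q' :
  projective q q' -> projective (lift_quotient q) (lift_quotient q').
Proof.
elim=> [p|p p' p'' transp _ IH]; first exact: proj_refl.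
by apply: proj_step IH; case: transp => h; [left|right]; apply: lift_transposes_up.
Qed.

Lemma lift_quotient_lmorph v w :
  v = sigma phi (phi v) -> prime_quotient (v, w) -> lift_quotient (phi v, phi w) = (v, w).
Proof.
move=> v_sigma [/= wv cover_wv]; rewrite /lift_quotient /= -v_sigma; congr pair.
have w_lift : w <= sup_below v (phi w) by rewrite le_sup_below // ltW.
have [//|lift_v] := cover_wv _ w_lift (sup_below_le _ _).
have phi_vw : phi v <= phi w by rewrite -{1}lift_v lmorph_sup_below_le.
suff /(lt_le_trans wv) : v <= w by rewrite ltxx.
rewrite v_sigma sigma_le //; apply/le_anti.
by rewrite phi_vw (lmorph_homo_le phi_morph) // ltW.
Qed.

End LiftQuotient.

Theorem lemma1 (d : Order.disp_t) (L : finTBLatticeType d)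
  (d0 : Order.disp_t) (L0 : finTBLatticeType d0) (phi : L -> L0)
  (phi_morph : lattice_morphism phi) (phi_surj : forall y : L0, exists x : L, phi x = y)
  (v w : L) (v_nz : v != \bot) (v_sigma : v = sigma phi (phi v))
  (vw_prime : prime_quotient (v, w))
  (r s : L0) (rs_prime : prime_quotient (r, s))
  (rs_proj : projective (r, s) (phi v, phi w)) :
  let r_ := sigma phi r in
  let s_ := \join_(u | (u <= r_) && (phi u <= s)) u in
  prime_quotient (r_, s_) /\ projective (r_, s_) (v, w).
Proof.
move=> r_ s_; split; first exact: (lift_quotient_prime phi_morph phi_surj rs_prime).
rewrite -(lift_quotient_lmorph phi_morph phi_surj v_sigma vw_prime).
exact: (lift_projective phi_morph phi_surj rs_proj).
Qed.
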